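(* Consider Algorithm iR2N (described in the context) and suppose (A4) holds. Then for every iteration $k$, $$\varphi(0;x_k)+\psi(0;x_k)-\big(\varphi(s_k;x_k)+\psi(s_k;x_k)\big)\ \ge\ \tfrac12(1-\theta_1)\theta_2^{-2}\nu_k^{-1}\|s_k\|^2.$$
   Context: Setting. $f:\mathbb{R}^n\to\mathbb{R}$ is continuously differentiable, $h:\mathbb{R}^n\to\mathbb{R}\cup\{+\infty\}$ is proper and lower semicontinuous; the problem is $\min_x f(x)+h(x)$. $\|\cdot\|$ is the Euclidean norm (spectral norm for matrices). For each $x$, approximations $\hat f(x)\in\mathbb{R}$ of $f(x)$ and $\hat\nabla f(x)\in\mathbb{R}^n$ of $\nabla f(x)$ are available. For each $x$, $\psi(\cdot;x):\mathbb{R}^n\to\mathbb{R}\cup\{+\infty\}$ is proper, lsc, satisfies $\psi(0;x)=h(x)$ and $\partial\psi(0;x)\subseteq\partial h(x)$ ($\partial$ = limiting subdifferential), and is uniformly prox-bounded: there is $\lambda>0$ such that for every $x$ and every $0<\lambda'<\lambda$, $w\mapsto\psi(w;x)+\tfrac{1}{2\lambda'}\|w\|^2$ is bounded below. Models: $\varphi_{\mathrm{cp}}(s;x)=\hat f(x)+\hat\nabla f(x)^Ts$; $m_{\mathrm{cp}}(s;x,\nu^{-1})=\varphi_{\mathrm{cp}}(s;x)+\tfrac12\nu^{-1}\|s\|^2+\psi(s;x)$; for a symmetric $B(x)\in\mathbb{R}^{n\times n}$, $\varphi(s;x)=\hat f(x)+\hat\nabla f(x)^Ts+\tfrac12 s^TB(x)s$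 and $m(s;x,\sigma)=\varphi(s;x)+\tfrac12\sigma\|s\|^2+\psi(s;x)$. Algorithm iR2N. Constants: $\kappa_f,\kappa_\nabla>0$, $0<\gamma_3\le 1<\gamma_1\le\gamma_2$, $0<\hat\eta_1\le\hat\eta_2<1$, $0<\theta_1<1<\theta_2$, $\sigma_{\min}>4\kappa_f\theta_1\theta_2^2/(\hat\eta_1(1-\theta_1))$, $\sigma_0\ge\sigma_{\min}$, $x_0\in\mathbb{R}^n$. At iteration $k=0,1,\dots$: choose symmetric $B_k=B(x_k)$; set $\nu_k=\theta_1/(\|B_k\|+\sigma_k)$; compute $\hat s_{k,\mathrm{cp}}$ with $m_{\mathrm{cp}}(\hat s_{k,\mathrm{cp}};x_k,\nu_k^{-1})\le m_{\mathrm{cp}}(0;x_k,\nu_k^{-1})$ (an approximate minimizer of $m_{\mathrm{cp}}(\cdot;x_k,\nu_k^{-1})$ obtained by a descent procedure from $s=0$) and set $\hat\xi_{k,\mathrm{cp}}=(\varphi_{\mathrm{cp}}+\psi)(0;x_k)-(\varphi_{\mathrm{cp}}+\psi)(\hat s_{k,\mathrm{cp}};x_k)$; compute $s_k$ with $m(s_k;x_k,\sigma_k)\le m(\hat s_{k,\mathrm{cp}};x_k,\sigma_k)$; if $\|s_k\|>\theta_2\|\hat s_{k,\mathrm{cp}}\|$, reset $s_k=\hat s_{k,\mathrm{cp}}$ (these computations are repeated with refined $\hat f,\hat\nabla f$ until the inexactness bounds (A6) hold: $|f(x_k)-\hat f(x_k)|\le\kappa_f\|s_k\|^2$, $|f(x_k+s_k)-\hat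 f(x_k+s_k)|\le\kappa_f\|s_k\|^2$, $\|\nabla f(x_k)-\hat\nabla f(x_k)\|\le\kappa_\nabla\|s_k\|$). Compute $$\hat\rho_k=\frac{\hat f(x_k)+h(x_k)-\hat f(x_k+s_k)-h(x_k+s_k)}{\varphi(0;x_k)+\psi(0;x_k)-\varphi(s_k;x_k)-\psi(s_k;x_k)},$$ where $\varphi(\cdot;x_k)$ uses $B_k$. If $\hat\rho_k\ge\hat\eta_1$ (successful) set $x_{k+1}=x_k+s_k$, else $x_{k+1}=x_k$. Choose $\sigma_{k+1}\in[\gamma_3\sigma_k,\sigma_k]$ if $\hat\rho_k\ge\hat\eta_2$ (very successful), $\sigma_{k+1}\in[\sigma_k,\gamma_1\sigma_k]$ if $\hat\eta_1\le\hat\rho_k<\hat\eta_2$, $\sigma_{k+1}\in[\gamma_1\sigma_k,\gamma_2\sigma_k]$ if $\hat\rho_k<\hat\eta_1$; then reset $\sigma_{k+1}=\max(\sigma_{k+1},\sigma_{\min})$. (A4): for all $k$, $\varphi(0;x_k)+\psi(0;x_k)-(\varphi(s_k;x_k)+\psi(s_k;x_k))\ge(1-\theta_1)\hat\xi_{k,\mathrm{cp}}$. *)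

From HB Require Import structures.
From mathcomp Require Import all_boot all_order all_algebra.
From mathcomp Require Import all_classical all_reals all_analysis.
Set Implicit Arguments. Unset Strict Implicit. Unset Printing Implicit Defensive.
Import Order.TTheory GRing.Theory Num.Theory.
Local Open Scope classical_set_scope.
Local Open Scope ring_scope.

Section Defs.
Variables (R : realType) (n : nat).

Definition vdot (u v : 'cV[R]_n) : R := \sum_(i < n) u i 0 * v i 0.
Definition vnorm (v : 'cV[R]_n) : R := Num.sqrt (vdot v v).

Definition specnorm (B : 'M[R]_n) : R :=
  sup [set vnorm (B *m v) | v in [set v : 'cV[R]_n | vnorm v <= 1]].

Definition phi_cp (fh : R) (gh s : 'cV[R]_n) : R := fh + vdot gh s.

Definition m_cp (fh : R) (gh : 'cV[R]_n) (psix : 'cV[R]_n -> \bar R)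
  (nuinv : R) (s : 'cV[R]_n) : \bar R :=
  ((phi_cp fh gh s + 2^-1 * nuinv * vnorm s ^+ 2)%:E + psix s)%E.

Definition phi_q (fh : R) (gh : 'cV[R]_n) (B : 'M[R]_n) (s : 'cV[R]_n) : R :=
  fh + vdot gh s + 2^-1 * vdot s (B *m s).

Definition m_q (fh : R) (gh : 'cV[R]_n) (B : 'M[R]_n) (psix : 'cV[R]_n -> \bar R)
  (sigma : R) (s : 'cV[R]_n) : \bar R :=
  ((phi_q fh gh B s + 2^-1 * sigma * vnorm s ^+ 2)%:E + psix s)%E.

Definition proper_fun (g : 'cV[R]_n -> \bar R) : Prop :=
  (forall w, g w != -oo%E) /\ (exists w, g w \is a fin_num).

Definition unif_prox_bounded (psi : 'cV[R]_n -> 'cV[R]_n -> \bar R) : Prop :=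
  exists lam : R, 0 < lam /\
    forall (x : 'cV[R]_n) (lam' : R), 0 < lam' < lam ->
      exists c : R, forall w,
        (c%:E <= psi x w + (vnorm w ^+ 2 / (2 * lam'))%:E)%E.

Definition xi_cp (fh : R) (gh : 'cV[R]_n) (psix : 'cV[R]_n -> \bar R)
  (scp : 'cV[R]_n) : \bar R :=
  (((phi_cp fh gh (0%R : 'cV[R]_n))%:E + psix (0%R : 'cV[R]_n)) - ((phi_cp fh gh scp)%:E + psix scp))%E.

Definition model_decrease (fh : R) (gh : 'cV[R]_n) (B : 'M[R]_n)
  (psix : 'cV[R]_n -> \bar R) (s : 'cV[R]_n) : \bar R :=
  (((phi_q fh gh B (0%R : 'cV[R]_n))%:E + psix (0%R : 'cV[R]_n)) - ((phi_q fh gh B s)%:E + psix s))%E.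

(* rho_hat as a real number: (extended-real) numerator over denominator,
   each converted to R by [fine] (an infinite numerator such as
   h(x_k+s_k) = +oo gives rho_hat = 0, i.e. an unsuccessful step) *)
Definition rho_hat (h : 'cV[R]_n -> \bar R) (psix : 'cV[R]_n -> \bar R)
  (xk : 'cV[R]_n) (fh_x fh_xs : R) (gh : 'cV[R]_n) (B : 'M[R]_n)
  (s : 'cV[R]_n) : R :=
  fine ((fh_x%:E + h xk) - (fh_xs%:E + h (xk + s)%R))%E
  / fine (model_decrease fh_x gh B psix s).

(* At iteration k:
   fh k = \hat f(x_k), fhs k = \hat f(x_k + s_k), gh k = \hat\nabla f(x_k)
   (the final, refined approximations), B k = B_k, sigma k = sigma_k,
   nu k = nu_k, scp k = \hat s_{k,cp}, strial k = the step computed before the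
   safeguard reset, s k = s_k. *)
Definition iR2N_run (h : 'cV[R]_n -> \bar R) (psi : 'cV[R]_n -> 'cV[R]_n -> \bar R)
  (theta1 theta2 eta1 eta2 gamma1 gamma2 gamma3 sigma_min : R)
  (x : nat -> 'cV[R]_n) (fh fhs : nat -> R) (gh : nat -> 'cV[R]_n)
  (B : nat -> 'M[R]_n) (sigma nu : nat -> R)
  (scp strial s : nat -> 'cV[R]_n) : Prop :=
  forall k : nat,
    let rho := rho_hat h (psi (x k)) (x k) (fh k) (fhs k) (gh k) (B k) (s k) in
    [/\ (B k)^T = B k /\ nu k = theta1 / (specnorm (B k) + sigma k),
        (m_cp (fh k) (gh k) (psi (x k)) (nu k)^-1 (scp k)
           <= m_cp (fh k) (gh k) (psi (x k)) (nu k)^-1 (0%R : 'cV[R]_n))%E,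
        (m_q (fh k) (gh k) (B k) (psi (x k)) (sigma k) (strial k)
           <= m_q (fh k) (gh k) (B k) (psi (x k)) (sigma k) (scp k))%E,
        (s k = (if vnorm (strial k) > theta2 * vnorm (scp k)
               then scp k else strial k)) /\
        x k.+1 = (if rho >= eta1 then x k + s k else x k) &
        (exists sig' : R,
          [/\ eta2 <= rho -> gamma3 * sigma k <= sig' <= sigma k,
              eta1 <= rho < eta2 -> sigma k <= sig' <= gamma1 * sigma k,
              rho < eta1 -> gamma1 * sigma k <= sig' <= gamma2 * sigma k &
              sigma k.+1 = Num.max sig' sigma_min])].

End Defs.

From HB Require Import structures.
From mathcomp Require Import all_boot all_order all_algebra.
From mathcomp Require Import all_classical all_reals all_analysis.
From mathcomp Require Import ring lra.
Import Order.TTheory GRing.Theory Num.Theory.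
Local Open Scope ring_scope.

(* Since [m_cp] adds [1/2 nu^-1 ||s||^2] to the linear-plus-[psi] model, the
   decrease [m_cp(s_cp) <= m_cp(0)] of the Cauchy step gives
   [xi_cp >= 1/2 nu^-1 ||s_cp||^2].  Combined with (A4) and the safeguard
   [||s_k|| <= theta2 ||s_cp||] this is the claim.  The only delicate point is
   that everything is finite: [h(x_k)] stays finite along the iterates because
   a trial point with [h = +oo] gives [rho_hat = 0 < eta1] and is rejected. *)

Section Norms.
Variables (R : realType) (n : nat).

Lemma vnorm0 : vnorm (0 : 'cV[R]_n) = 0.
Proof. by rewrite /vnorm /vdot big1 ?sqrtr0 // => i _; rewrite mxE mul0r. Qed.

Lemma vnorm_ge0 (v : 'cV[R]_n) : 0 <= vnorm v.
Proof. exact: sqrtr_ge0. Qed.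

Lemma specnorm_ge0 (B : 'M[R]_n) : 0 <= specnorm B.
Proof.
rewrite /specnorm; set S := (X in sup X).
have S0 : S 0 by exists 0; rewrite /= ?vnorm0 ?ler01 // mulmx0 vnorm0.
have [supS|nosupS] := pselect (has_sup S); first exact: sup_upper_bound supS _ S0.
by rewrite sup_out.
Qed.

Lemma safeguarded_step_le (theta2 : R) (scp strial : 'cV[R]_n) :
  1 <= theta2 ->
  vnorm (if theta2 * vnorm scp < vnorm strial then scp else strial)
    <= theta2 * vnorm scp.
Proof.
move=> theta2_ge1; case: ltP => // _.
by rewrite ler_peMl ?vnorm_ge0.
Qed.

End Norms.

Section OneIteration.
Context {R : realType} {n : nat} {fh : R} {gh : 'cV[R]_n}.
Context {psix : 'cV[R]_n -> \bar R}.
Hypotheses (psix0_fin : psix 0 \is a fin_num)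
           (psix_ninfty : forall w, psix w != -oo%E).

Lemma xi_cp_ge_prox_term (nuinv : R) (scp : 'cV[R]_n) :
  (m_cp fh gh psix nuinv scp <= m_cp fh gh psix nuinv 0)%E ->
  ((2^-1 * nuinv * vnorm scp ^+ 2)%:E <= xi_cp fh gh psix scp)%E.
Proof.
rewrite /m_cp /xi_cp vnorm0 expr0n mulr0 addr0 -(fineK psix0_fin).
by case: (psix scp) (psix_ninfty scp) => [d| |] //= _; rewrite !lee_fin; lra.
Qed.

Lemma model_decrease_ge_step (B : 'M[R]_n) (nuinv theta1 theta2 : R)
    (scp s : 'cV[R]_n) :
  0 <= nuinv -> theta1 <= 1 -> 0 < theta2 ->
  vnorm s <= theta2 * vnorm scp ->
  (m_cp fh gh psix nuinv scp <= m_cp fh gh psix nuinv 0)%E ->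
  ((1 - theta1)%:E * xi_cp fh gh psix scp <= model_decrease fh gh B psix s)%E ->
  ((2^-1 * (1 - theta1) * (theta2 ^+ 2)^-1 * nuinv * vnorm s ^+ 2)%:E
     <= model_decrease fh gh B psix s)%E.
Proof.
move=> nuinv_ge0 theta1_le1 theta2_gt0 s_le cp_decr A4.
have s_scaled : vnorm s ^+ 2 / theta2 ^+ 2 <= vnorm scp ^+ 2.
  rewrite ler_pdivrMr ?exprn_gt0 // -exprMn mulrC.
  by rewrite ler_pXn2r ?nnegrE ?vnorm_ge0 // mulr_ge0 ?vnorm_ge0 // ltW.
have theta1_term_ge0 : (0 <= (1 - theta1)%:E)%E by rewrite lee_fin subr_ge0.
apply: le_trans A4.
apply: (le_trans _ (lee_wpmul2l theta1_term_ge0 (xi_cp_ge_prox_term _ _ cp_decr))).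
rewrite -EFinM lee_fin.
have -> : 2^-1 * (1 - theta1) * (theta2 ^+ 2)^-1 * nuinv * vnorm s ^+ 2
    = 2^-1 * (1 - theta1) * nuinv * (vnorm s ^+ 2 / theta2 ^+ 2) by ring.
have -> : (1 - theta1) * (2^-1 * nuinv * vnorm scp ^+ 2)
    = 2^-1 * (1 - theta1) * nuinv * vnorm scp ^+ 2 by ring.
by rewrite ler_wpM2l // !mulr_ge0 // ?subr_ge0.
Qed.

End OneIteration.

Lemma rho_hat_pinfty (R : realType) (n : nat) (h psix : 'cV[R]_n -> \bar R)
    (xk : 'cV[R]_n) (fh_x fh_xs : R) (gh : 'cV[R]_n) (B : 'M[R]_n) (s : 'cV[R]_n) :
  h xk \is a fin_num -> h (xk + s) = +oo%E ->
  rho_hat h psix xk fh_x fh_xs gh B s = 0.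
Proof. by rewrite /rho_hat => /fineK <- ->; rewrite /= mul0r. Qed.

Section Run.
Context {R : realType} {n : nat}.
Context {h : 'cV[R]_n -> \bar R} {psi : 'cV[R]_n -> 'cV[R]_n -> \bar R}.
Context {theta1 theta2 eta1 eta2 gamma1 gamma2 gamma3 sigma_min : R}.
Context {x : nat -> 'cV[R]_n} {fh fhs : nat -> R} {gh : nat -> 'cV[R]_n}.
Context {B : nat -> 'M[R]_n} {sigma nu : nat -> R}.
Context {scp strial s : nat -> 'cV[R]_n}.
Hypothesis run : iR2N_run h psi theta1 theta2 eta1 eta2 gamma1 gamma2 gamma3
  sigma_min x fh fhs gh B sigma nu scp strial s.

Lemma sigma_ge_min : sigma_min <= sigma 0%N -> forall k, sigma_min <= sigma k.
Proof.
move=> sigma0_ge; elim=> // k _; have [_ _ _ _ [sig' [_ _ _ ->]]] := run k.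
by rewrite le_max lexx orbT.
Qed.

Lemma inv_nu_ge0 k : 0 <= theta1 -> 0 <= sigma k -> 0 <= (nu k)^-1.
Proof.
have [[_ ->] _ _ _ _] := run k; move=> theta1_ge0 sigma_ge0.
by rewrite invf_div divr_ge0 ?addr_ge0 ?specnorm_ge0.
Qed.

Lemma h_iterates_fin_num : (forall w, h w != -oo%E) -> 0 < eta1 ->
  h (x 0%N) \is a fin_num -> forall k, h (x k) \is a fin_num.
Proof.
move=> h_ninfty eta1_gt0 hx0; elim=> // k hxk.
have [_ _ _ [_ ->] _] := run k; case: ifP => // accepted.
case hxs : (h (x k + s k)) (h_ninfty (x k + s k)) => [r| |] // _.
by move: accepted; rewrite rho_hat_pinfty // leNgt eta1_gt0.
Qed.

End Run.

Theorem lemma3p2 (R : realType) (n : nat)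
  (h : 'cV[R]_n -> \bar R) (psi : 'cV[R]_n -> 'cV[R]_n -> \bar R)
  (kappa_f kappa_g theta1 theta2 eta1 eta2 gamma1 gamma2 gamma3 sigma_min : R)
  (x : nat -> 'cV[R]_n) (fh fhs : nat -> R) (gh : nat -> 'cV[R]_n)
  (B : nat -> 'M[R]_n) (sigma nu : nat -> R)
  (scp strial s : nat -> 'cV[R]_n) :
  proper_fun h ->
  (forall xx, proper_fun (psi xx)) ->
  (forall xx, psi xx 0 = h xx) ->
  unif_prox_bounded psi ->
  h (x 0%N) \is a fin_num ->
  0 < kappa_f -> 0 < kappa_g ->
  0 < gamma3 <= 1 -> 1 < gamma1 <= gamma2 ->
  0 < eta1 <= eta2 -> eta2 < 1 ->
  0 < theta1 < 1 -> 1 < theta2 ->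
  4 * kappa_f * theta1 * theta2 ^+ 2 / (eta1 * (1 - theta1)) < sigma_min ->
  sigma_min <= sigma 0%N ->
  iR2N_run h psi theta1 theta2 eta1 eta2 gamma1 gamma2 gamma3 sigma_min
    x fh fhs gh B sigma nu scp strial s ->
  (* assumption (A4) *)
  (forall k, (model_decrease (fh k) (gh k) (B k) (psi (x k)) (s k)
               >= (1 - theta1)%:E * xi_cp (fh k) (gh k) (psi (x k)) (scp k))%E) ->
  forall k : nat,
    (model_decrease (fh k) (gh k) (B k) (psi (x k)) (s k)
      >= (2^-1 * (1 - theta1) * (theta2 ^+ 2)^-1 * (nu k)^-1
          * vnorm (s k) ^+ 2)%:E)%E.
Proof.
move=> [h_ninfty _] psi_proper psi0 _ hx0 kappa_f_gt0 _ _ _ /andP[eta1_gt0 _] _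
  /andP[theta1_gt0 theta1_lt1] theta2_gt1 sigma_min_gt sigma0_ge run A4 k.
have theta2_gt0 : 0 < theta2 by apply: lt_trans theta2_gt1.
have sigma_min_gt0 : 0 < sigma_min.
  by apply: le_lt_trans sigma_min_gt; rewrite !(divr_ge0, mulr_ge0) ?subr_ge0 ?ltW.
have [_ cp_decr _ [s_def _] _] := run k.
have [psi_ninfty _] := psi_proper (x k).
have psi0_fin : psi (x k) 0 \is a fin_num by rewrite psi0 (h_iterates_fin_num run).
have inv_nu_k_ge0 : 0 <= (nu k)^-1.
  apply: (inv_nu_ge0 run); first exact: ltW.
  by apply: le_trans (sigma_ge_min run sigma0_ge k); rewrite ltW.
have s_le : vnorm (s k) <= theta2 * vnorm (scp k).
  by rewrite s_def safeguarded_step_le // ltW.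
exact: (model_decrease_ge_step psi0_fin psi_ninfty _ _ _ _ _ _ inv_nu_k_ge0
  (ltW theta1_lt1) theta2_gt0 s_le cp_decr (A4 k)).
Qed.
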